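(* Let $K$ be a positive semiring, let $k\ge1$ and $d\ge2$ be integers, and let $H=(V,E)$ be a $k$-uniform, $d$-regular hypergraph with distinct hyperedges $X_1,\ldots,X_m$, where the vertices are attributes whose domains all contain $\{0,1,\ldots,d-1\}$. For $i\in[m]$ let $R_i$ be the $K$-relation over $X_i$ such that $R_i(t)=1$ if $t$ takes values in $\{0,\ldots,d-1\}$ and $\sum_{C\in X_i}t(C)\equiv \delta_i \pmod d$, and $R_i(t)=0$ otherwise, where $\delta_i=0$ for $i\neq m$ and $\delta_m=1$. Then the collection $R_1,\ldots,R_m$ is pairwise consistent but not globally consistent.
   Context: A commutative semiring $(K,+,\cdot,0,1)$ with $0\neq 1$ is positive if $a+b=0$ implies $a=b=0$, and $ab=0$ implies $a=0$ or $b=0$. For a finite set of attributes $X$, $\mathrm{Tup}(X)$ is the set of maps assigning to each $A\in X$ an element of its domain; $t[Y]$ is restriction; $XY=X\cup Y$. A $K$-relation over $X$ is a map $R:\mathrm{Tup}(X)\to K$ with finite support $R'=\{t:R(t)\neq0\}$; its marginal on $Y\subseteq X$ is $R[Y](u)=\sum_{r\in R',r[Y]=u}R(r)$. $R\equiv S$ means $aR=bS$ for nonzero $a,b\in K$. $R$ over $X$ and $S$ over $Y$ are consistent if some $K$-relation $T$ over $XY$ has $R\equiv T[X]$, $S\equiv T[Y]$. A collection $R_1,\dots,R_m$ ($R_i$ over $X_i$) is pairwise consistent if every two members are consistent, and globally consistent if some $K$-relation $T$ over $X_1\cup\cdots\cup X_m$ satisfies $R_i\equiv T[X_i]$ for all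 $i$. A hypergraph is $k$-uniform if every hyperedge has exactly $k$ vertices, and $d$-regular if every vertex lies in exactly $d$ hyperedges. *)

From HB Require Import structures.
From mathcomp Require Import all_boot all_order all_algebra.
Set Implicit Arguments. Unset Strict Implicit. Unset Printing Implicit Defensive.
Import GRing.Theory.
Local Open Scope ring_scope.

Definition positive_semiring (K : comNzSemiRingType) : Prop :=
  (forall a b : K, a + b = 0 -> a = 0 /\ b = 0) /\
  (forall a b : K, a * b = 0 -> a = 0 \/ b = 0).

Section KRel.
Variables (V : finType) (D : eqType) (dom : V -> D -> Prop) (K : comNzSemiRingType).

(* Attributes are the elements of V; all domains are subsets dom A of a universe D.
   A tuple over X is encoded as a map V -> option D that is Some v (v in dom A) on X
   and None outside X. *)
Definition tup := {ffun V -> option D}.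

Definition is_tup (X : {set V}) (t : tup) : Prop :=
  forall A, if A \in X then exists2 v, t A = Some v & dom A v else t A = None.

Definition restr (Y : {set V}) (t : tup) : tup :=
  [ffun A => if A \in Y then t A else None].

Record Krel (X : {set V}) := {
  krel :> tup -> K;
  ksupp : seq tup;
  ksuppP : forall t, krel t != 0 -> t \in ksupp;
  ktupP : forall t, krel t != 0 -> is_tup X t }.

Definition marg (X : {set V}) (T : Krel X) (Y : {set V}) : tup -> K :=
  fun u => \sum_(r <- undup (ksupp T) | restr Y r == u) T r.

Definition kequiv (f g : tup -> K) : Prop :=
  exists a b : K, [/\ a != 0, b != 0 & forall t, a * f t = b * g t].

Definition consistent (X : {set V}) (R : tup -> K) (Y : {set V}) (S : tup -> K) : Prop :=
  exists T : Krel (X :|: Y), kequiv R (marg T X) /\ kequiv S (marg T Y).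

Definition pairwise_consistent (m : nat) (X : 'I_m -> {set V}) (R : 'I_m -> tup -> K) : Prop :=
  forall i j, consistent (X i) (R i) (X j) (R j).

Definition globally_consistent (m : nat) (X : 'I_m -> {set V}) (R : 'I_m -> tup -> K) : Prop :=
  exists T : Krel (\bigcup_(i < m) X i), forall i, kequiv (R i) (marg T (X i)).

Definition uniform_hg (k m : nat) (X : 'I_m -> {set V}) : Prop := forall i, #|X i| = k.
Definition regular_hg (d m : nat) (X : 'I_m -> {set V}) : Prop :=
  forall v : V, #|[set i | v \in X i]| = d.

Definition digit (d : nat) (emb : 'I_d -> D) (t : tup) (A : V) : option 'I_d :=
  [pick j : 'I_d | t A == Some (emb j)].

Definition modrel (d : nat) (emb : 'I_d -> D) (X : {set V}) (delta : nat) (t : tup) : K :=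
  if [forall A, if A \in X then digit emb t A != None else t A == None] &&
     ((\sum_(A in X) oapp (@nat_of_ord d) 0%N (digit emb t A)) == delta %[mod d])%N
  then 1 else 0.

End KRel.

From HB Require Import structures.
From mathcomp Require Import all_boot all_order all_algebra.
Set Implicit Arguments. Unset Strict Implicit. Unset Printing Implicit Defensive.
Import GRing.Theory.
Local Open Scope ring_scope.

(* Write d = n.+2 and read tuples with values in {0..d-1} as assignments
   f : V -> Z_d (encoded by [enc]); the relation R_i is then the indicator of
   the assignments on X_i whose sum is delta_i in Z_d ([modrelE]).

   For two hyperedges Y, Z of equal size, pair the
   points of Y :\: Z with those of Z :\: Y and let T be the indicator of the
   assignments on Y :|: Z that copy their values along the pairing (the first
   pair shifted by delta_Z - delta_Y) and have the right sums on Y and Z.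
   Every admissible assignment on Y has exactly one such extension, so the
   marginals of T are exactly R_Y and R_Z ([sum_pair_rel], [modrel_consistent]).

   A global witness T has a tuple t in its support; by
   positivity every restriction of t lies in the support of R_i, so the digits
   of t sum to delta_i over each X_i.  Summing over i and double counting in
   the d-regular hypergraph gives sum_i delta_i = 0 in Z_d, whereas the deltas
   sum to 1 ([modrel_not_globally_consistent]). *)

Lemma natr_Zp_eq (p a b : nat) :
  (a%:R == b%:R :> 'I_p.+2) = (a == b %[mod p.+2])%N.
Proof. by rewrite !Zp_nat; apply/eqP/eqP => [/(congr1 val) // | e]; apply: val_inj. Qed.

Lemma natr_Zp_eq0 (p a : nat) : (a%:R == 0 :> 'I_p.+2) = (p.+2 %| a)%N.
Proof. by rewrite -(mulr0n 1) natr_Zp_eq mod0n. Qed.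

Lemma sum_Zp_val (p : nat) (I : finType) (P : pred I) (f : I -> 'I_p.+2) :
  \sum_(i | P i) f i = (\sum_(i | P i) val (f i))%:R.
Proof. by rewrite natr_sum; apply: eq_bigr => i _; rewrite natr_Zp. Qed.

Lemma sum_regular_hg (M : nmodType) (V : finType) (r m : nat)
    (X : 'I_m -> {set V}) (g : V -> M) :
  regular_hg r X -> \sum_(i < m) \sum_(A in X i) g A = (\sum_A g A) *+ r.
Proof.
move=> reg; under eq_bigr => i _ do rewrite big_mkcond.
rewrite exchange_big -sumrMnl; apply: eq_bigr => A _.
rewrite -big_mkcond -(reg A) -sumr_const /=.
by apply: eq_bigl => i; rewrite inE.
Qed.

Section Encoding.
Variables (V : finType) (D : eqType) (n : nat) (emb : 'I_n.+2 -> D).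
Hypothesis emb_inj : injective emb.
Implicit Types (Y U : {set V}) (f g : {ffun V -> 'I_n.+2}) (t : tup V D).

Definition enc Y f : tup V D :=
  [ffun A => if A \in Y then Some (emb (f A)) else None].

Lemma digit_enc Y f A : digit emb (enc Y f) A = if A \in Y then Some (f A) else None.
Proof.
rewrite /digit ffunE; case: ifP => _; last by case: pickP.
by case: pickP => [j /eqP [] /emb_inj -> // | /(_ (f A))]; rewrite eqxx.
Qed.

Lemma restr_enc Y U f : Y \subset U -> restr Y (enc U f) = enc Y f.
Proof.
move=> sYU; apply/ffunP => A; rewrite !ffunE.
by case: ifP => // /(subsetP sYU) ->.
Qed.

Lemma enc_eqP Y f g : reflect {in Y, f =1 g} (enc Y f == enc Y g).
Proof.
apply: (iffP eqP) => [e A YA | e].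
  by have := congr1 (fun t : tup V D => t A) e; rewrite !ffunE YA => -[/emb_inj].
by apply/ffunP => A; rewrite !ffunE; case: ifP => // /e ->.
Qed.

Definition digits t : {ffun V -> 'I_n.+2} := [ffun A => odflt ord0 (digit emb t A)].

Definition sum_constraint Y (a : 'I_n.+2) t : bool :=
  [exists f, (t == enc Y f) && (\sum_(A in Y) f A == a)].

Lemma modrelE (K : comNzSemiRingType) Y (delta : nat) t :
  modrel K emb Y delta t = if sum_constraint Y delta%:R t then 1 else 0.
Proof.
rewrite /modrel; congr (if _ then _ else _).
apply/andP/existsP => [[/forallP onY sum_t] | [f /andP [/eqP -> sum_f]]].
  have t_enc : t = enc Y (digits t).
    apply/ffunP => A; rewrite !ffunE; move: (onY A); case: ifP => _; last by move/eqP.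
    by rewrite /digit; case: pickP => [j /eqP -> | _] //; rewrite eqxx.
  exists (digits t); rewrite -t_enc eqxx sum_Zp_val natr_Zp_eq.
  rewrite -(eqP sum_t); apply/eqP; congr (_ %% _)%N; apply: eq_bigr => A YA.
  by rewrite ffunE; move: (onY A); rewrite YA; case: (digit emb t A).
split; first by apply/forallP => A; rewrite digit_enc !ffunE; case: (A \in Y).
rewrite -(natr_Zp_eq n) -(eqP sum_f) sum_Zp_val; apply/eqP; congr (_%:R).
by apply: eq_bigr => A YA; rewrite digit_enc YA.
Qed.

Lemma modrel_witness (K : comNzSemiRingType) Y (delta : nat) :
  Y != set0 -> exists t, modrel K emb Y delta t != 0.
Proof.
case/set0Pn => x0 Yx0.
pose f : {ffun V -> 'I_n.+2} := [ffun A => if A == x0 then delta%:R else 0].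
exists (enc Y f); rewrite modrelE ifT ?oner_neq0 //; apply/existsP; exists f.
rewrite eqxx (bigD1 x0) //= big1 => [|A /andP [_ /negbTE ne_A]]; last by rewrite ffunE ne_A.
by rewrite ffunE eqxx addr0.
Qed.

Lemma modrel_restr_sum (K : comNzSemiRingType) Y (delta : nat) t :
  modrel K emb Y delta (restr Y t) != 0 -> \sum_(A in Y) digits t A = delta%:R.
Proof.
rewrite modrelE; case: ifP => [/existsP [f /andP [/eqP res_t /eqP <-]] _ | _];
  last by rewrite eqxx.
apply: eq_bigr => A YA; rewrite ffunE.
have -> : digit emb t A = digit emb (restr Y t) A by rewrite /digit ffunE YA.
by rewrite res_t digit_enc YA.
Qed.

End Encoding.

Section Pairing.
Variables (V : finType) (n : nat) (x0 : V).
Implicit Types (Y Z : {set V}) (a b : 'I_n.+2) (f g : {ffun V -> 'I_n.+2}).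

(* The r-th element of Y :\: Z; for r < #|Y :\: Z| = #|Z :\: Y| these pair
   Y :\: Z bijectively with Z :\: Y (x0 is only an unused default). *)
Definition diff_nth Y Z (r : nat) : V := nth x0 (enum (Y :\: Z)) r.

Definition first_pair (r : nat) a : 'I_n.+2 := if r == 0%N then a else 0.

(* f copies its values on Y :\: Z to the paired points of Z :\: Y, the first
   pair being shifted by b - a. *)
Definition linked Y Z a b f : bool :=
  all (fun r => f (diff_nth Z Y r) + first_pair r a == f (diff_nth Y Z r) + first_pair r b)
      (iota 0 #|Y :\: Z|).

Definition admissible Y Z a b f : bool :=
  [&& \sum_(A in Y) f A == a, \sum_(A in Z) f A == b & linked Y Z a b f].

Lemma admissible_sym Y Z a b f : #|Y :\: Z| = #|Z :\: Y| ->
  admissible Y Z a b f = admissible Z Y b a f.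
Proof.
move=> card_YZ; rewrite /admissible andbCA /linked -card_YZ.
by congr [&& _, _ & _]; apply: eq_all => r; rewrite eq_sym.
Qed.

Lemma diff_nthP Y Z r : (r < #|Y :\: Z|)%N -> diff_nth Y Z r \in Y :\: Z.
Proof. by move=> lt_r; rewrite -mem_enum mem_nth // -cardE. Qed.

Lemma diff_nthK Y Z A : A \in Y :\: Z -> diff_nth Y Z (index A (enum (Y :\: Z))) = A.
Proof. by move=> YZA; rewrite /diff_nth nth_index // mem_enum. Qed.

Lemma linked_sum Y Z a b f : #|Y :\: Z| = #|Z :\: Y| ->
  (Y :\: Z = set0 -> a = b) -> linked Y Z a b f ->
  \sum_(A in Z) f A + a = \sum_(A in Y) f A + b.
Proof.
move=> card_YZ eq_ab /allP lnk.
rewrite (big_setID Y) [in RHS](big_setID Z) /= setIC -!addrA; congr (_ + _).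
case E: #|Y :\: Z| => [|k].
  have /cards0_eq YZ0 := E; have /cards0_eq ZY0 : #|Z :\: Y| = 0%N by rewrite -card_YZ.
  by rewrite YZ0 ZY0 !big_set0 (eq_ab YZ0).
have first_sum c : \sum_(0 <= r < k.+1) first_pair r c = c.
  rewrite big_ltn // big1_seq ?addr0 // => -[|r] /andP [_] //.
  by rewrite mem_index_iota.
rewrite -(first_sum a) -(first_sum b) -!big_enum (big_nth x0) [in RHS](big_nth x0).
rewrite -!cardE -card_YZ E -!big_split /=; apply: eq_big_nat => r lt_r.
by apply/eqP/lnk; rewrite mem_iota E.
Qed.

Definition extend Y Z a b g : {ffun V -> 'I_n.+2} :=
  [ffun A => if A \in Z :\: Y then
     let r := index A (enum (Z :\: Y)) in
     g (diff_nth Y Z r) + first_pair r b - first_pair r a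
   else g A].

Lemma extend_on Y Z a b g : {in Y, extend Y Z a b g =1 g}.
Proof. by move=> A YA; rewrite ffunE inE YA. Qed.

Lemma extend_admissible Y Z a b g : #|Y :\: Z| = #|Z :\: Y| ->
  (Y :\: Z = set0 -> a = b) -> \sum_(A in Y) g A = a ->
  admissible Y Z a b (extend Y Z a b g).
Proof.
move=> card_YZ eq_ab sum_g; set f := extend Y Z a b g.
have sumY : \sum_(A in Y) f A = a.
  by rewrite -sum_g; apply: eq_bigr => A; apply: extend_on.
have lnk : linked Y Z a b f.
  apply/allP => r; rewrite mem_iota add0n => /andP [_ lt_r].
  have ZYr : diff_nth Z Y r \in Z :\: Y by rewrite diff_nthP // -card_YZ.
  have /setDP [Yr _] := diff_nthP lt_r.
  rewrite /f (extend_on _ _ _ _ Yr) ffunE ZYr index_uniq ?enum_uniq -?cardE -?card_YZ //.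
  by rewrite subrK.
rewrite /admissible sumY eqxx lnk andbT /=.
by apply/eqP/(addIr a); rewrite (linked_sum card_YZ eq_ab lnk) sumY addrC.
Qed.

Lemma linked_determined Y Z a b f1 f2 : #|Y :\: Z| = #|Z :\: Y| ->
  linked Y Z a b f1 -> linked Y Z a b f2 -> {in Y, f1 =1 f2} ->
  {in Y :|: Z, f1 =1 f2}.
Proof.
move=> card_YZ /allP lnk1 /allP lnk2 eqY A; case: (boolP (A \in Y)) => [/eqY // | Y'A].
rewrite inE (negbTE Y'A) /= => ZA.
have ZYA : A \in Z :\: Y by rewrite inE Y'A.
set r := index A (enum (Z :\: Y)).
have lt_r : (r < #|Y :\: Z|)%N by rewrite card_YZ cardE index_mem mem_enum.
have /setDP [Yr _] := diff_nthP lt_r.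
have r_iota : r \in iota 0 #|Y :\: Z| by rewrite mem_iota.
move: (lnk1 r r_iota) (lnk2 r r_iota); rewrite diff_nthK // => /eqP e1 /eqP e2.
by apply: (addIr (first_pair r a)); rewrite e1 e2 eqY.
Qed.

End Pairing.

Section PairRelation.
Variables (K : comNzSemiRingType) (V : finType) (D : eqType) (dom : V -> D -> Prop).
Variables (n : nat) (emb : 'I_n.+2 -> D) (x0 : V).
Hypotheses (emb_inj : injective emb) (dom_emb : forall A j, dom A (emb j)).
Implicit Types (Y Z U : {set V}) (a b : 'I_n.+2) (t u : tup V D).

Definition enc_all U : seq (tup V D) :=
  [seq enc emb U f | f <- enum {ffun V -> 'I_n.+2}].

Definition pair_rel Y Z a b t : K :=
  if [exists f, (t == enc emb (Y :|: Z) f) && admissible x0 Y Z a b f] then 1 else 0.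

Lemma pair_relP Y Z a b t : pair_rel Y Z a b t != 0 ->
  exists2 f, t = enc emb (Y :|: Z) f & admissible x0 Y Z a b f.
Proof.
by rewrite /pair_rel; case: existsP => [[f /andP [/eqP]] | _]; [exists f | rewrite eqxx].
Qed.

Lemma pair_rel_supp Y Z a b t : pair_rel Y Z a b t != 0 -> t \in enc_all (Y :|: Z).
Proof. by case/pair_relP => f -> _; apply: map_f; rewrite mem_enum. Qed.

Lemma pair_rel_tup Y Z a b t : pair_rel Y Z a b t != 0 -> is_tup dom (Y :|: Z) t.
Proof.
case/pair_relP => f -> _ A; rewrite ffunE.
by case: (A \in _); first exists (emb (f A)).
Qed.

Definition pair_krel Y Z a b : Krel dom K (Y :|: Z) :=
  Build_Krel (@pair_rel_supp Y Z a b) (@pair_rel_tup Y Z a b).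

Lemma pair_rel_sym Y Z a b t : #|Y :\: Z| = #|Z :\: Y| ->
  pair_rel Y Z a b t = pair_rel Z Y b a t.
Proof.
move=> card_YZ; rewrite /pair_rel setUC; congr (if _ then _ else _).
by apply: eq_existsb => f; rewrite admissible_sym.
Qed.

Lemma admissible_enc_unique Y Z a b f1 f2 : #|Y :\: Z| = #|Z :\: Y| ->
  admissible x0 Y Z a b f1 -> admissible x0 Y Z a b f2 ->
  enc emb Y f1 = enc emb Y f2 -> enc emb (Y :|: Z) f1 = enc emb (Y :|: Z) f2.
Proof.
move=> card_YZ /and3P [_ _ lnk1] /and3P [_ _ lnk2] /eqP /(enc_eqP emb_inj) eqY.
exact/eqP/(enc_eqP emb_inj)/(linked_determined card_YZ lnk1 lnk2).
Qed.

(* Summing the pairing relation over the tuples with a given restriction to Y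
   yields the parity relation over Y: each assignment satisfying it has exactly
   one admissible (namely, its linked) extension. *)
Lemma sum_pair_rel Y Z a b (delta : nat) u :
  #|Y :\: Z| = #|Z :\: Y| -> (Y :\: Z = set0 -> a = b) -> a = delta%:R ->
  \sum_(t <- undup (enc_all (Y :|: Z)) | restr Y t == u) pair_rel Y Z a b t =
  modrel K emb Y delta u.
Proof.
move=> card_YZ eq_ab def_a; rewrite modrelE // (_ : delta%:R = a) //.
have restr_adm t : restr Y t == u -> pair_rel Y Z a b t != 0 ->
    exists2 f, t = enc emb (Y :|: Z) f & u = enc emb Y f /\ admissible x0 Y Z a b f.
  by move=> /eqP <- /pair_relP [f -> adm_f]; exists f; rewrite ?restr_enc ?subsetUl.
case: (boolP (sum_constraint emb Y a u)) => [|no_sum]; last first.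
  rewrite big1_seq // => t /andP [res_t _]; apply/eqP/negP => /negP.
  case/(restr_adm t res_t) => f _ [u_f /and3P [sum_f _ _]].
  by apply: (negP no_sum); apply/existsP; exists f; rewrite u_f eqxx.
case/existsP => g /andP [/eqP def_u /eqP sum_g].
pose f := extend x0 Y Z a b g.
have adm_f : admissible x0 Y Z a b f := extend_admissible x0 card_YZ eq_ab sum_g.
have u_f : u = enc emb Y f.
  by rewrite def_u; apply/eqP/(enc_eqP emb_inj) => A /(extend_on x0 Z a b g).
have f_supp : enc emb (Y :|: Z) f \in undup (enc_all (Y :|: Z)).
  by rewrite mem_undup; apply: map_f; rewrite mem_enum.
rewrite -big_filter (bigD1_seq (enc emb (Y :|: Z) f)) ?filter_uniq ?undup_uniq //=;
  last by rewrite mem_filter restr_enc ?subsetUl // u_f eqxx.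
rewrite /pair_rel ifT; last by apply/existsP; exists f; rewrite eqxx.
rewrite big1_seq ?addr0 // => t /andP [t_neq]; rewrite mem_filter => /andP [res_t _].
apply/eqP/negP => /negP /(restr_adm t res_t) [f' def_t [u_f' adm_f']].
move/eqP: t_neq; apply; rewrite def_t.
by apply: admissible_enc_unique card_YZ adm_f' adm_f _; rewrite -u_f'.
Qed.

End PairRelation.

Lemma eq_card_setD0 (V : finType) (Y Z : {set V}) :
  #|Y| = #|Z| -> Y :\: Z = set0 -> Y = Z.
Proof.
move=> card_YZ /eqP; rewrite setD_eq0 => sYZ.
by apply/eqP; rewrite eqEcard sYZ card_YZ /=.
Qed.

(* Parity relations over two equally large sets are consistent; the pairing
   relation is a witness whose marginals are the relations themselves. *)
Lemma modrel_consistent (K : comNzSemiRingType) (V : finType) (D : eqType)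
    (dom : V -> D -> Prop) (n : nat) (emb : 'I_n.+2 -> D) (Y Z : {set V})
    (delta delta' : nat) :
  injective emb -> (forall A j, dom A (emb j)) ->
  Y != set0 -> #|Y| = #|Z| -> (Y = Z -> delta = delta') ->
  consistent dom Y (modrel K emb Y delta) Z (modrel K emb Z delta').
Proof.
move=> emb_inj dom_emb /set0Pn [x0 _] card_YZ eq_delta.
have card_diff : #|Y :\: Z| = #|Z :\: Y| by rewrite !cardsD card_YZ setIC.
have eqYZ : Y :\: Z = set0 -> delta%:R = delta'%:R :> 'I_n.+2.
  by move/(eq_card_setD0 card_YZ)/eq_delta ->.
have eqZY : Z :\: Y = set0 -> delta'%:R = delta%:R :> 'I_n.+2.
  by move/(eq_card_setD0 (esym card_YZ))/esym/eq_delta ->.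
exists (pair_krel K x0 dom_emb Y Z delta%:R delta'%:R).
split; exists 1, 1; split; rewrite ?oner_neq0 // => u; rewrite !mul1r /marg /=.
  exact/esym/sum_pair_rel.
under eq_bigr => t _ do rewrite pair_rel_sym //.
by rewrite setUC; apply/esym/sum_pair_rel.
Qed.

Section Supports.
Variables (K : comNzSemiRingType) (V : finType) (D : eqType).
Hypothesis K_pos : positive_semiring K.

Lemma mulf_neq0_pos (a b : K) : a != 0 -> b != 0 -> a * b != 0.
Proof.
by move=> a_neq0 b_neq0; apply/eqP => /(proj2 K_pos) [] /eqP; apply/negP.
Qed.

Lemma psum_eq0 (I : eqType) (s : seq I) (P : pred I) (F : I -> K) :
  \sum_(i <- s | P i) F i = 0 -> forall i, i \in s -> P i -> F i = 0.
Proof.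
elim: s => [|j s IHs] // sum0 i; rewrite big_cons in sum0.
rewrite inE => /orP [/eqP -> Pj | s_i Pi].
  by move: sum0; rewrite Pj => /(proj1 K_pos) [].
by apply: IHs s_i Pi; case: (P j) sum0 => // /(proj1 K_pos) [].
Qed.

Lemma kequiv_neq0 (f g : tup V D -> K) t : kequiv f g -> (f t != 0) = (g t != 0).
Proof.
case=> a [b [a_neq0 b_neq0 eq_fg]].
have scale (c x : K) : c != 0 -> (c * x != 0) = (x != 0).
  by move=> c_neq0; case: (eqVneq x 0) => [->|/(mulf_neq0_pos c_neq0)]; rewrite ?mulr0 ?eqxx.
by rewrite -(scale a) // eq_fg scale.
Qed.

Lemma marg_restr_neq0 (dom : V -> D -> Prop) (X Y : {set V}) (T : Krel dom K X) t :
  T t != 0 -> marg T Y (restr Y t) != 0.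
Proof.
move=> Tt; have t_supp : t \in undup (ksupp T) by rewrite mem_undup ksuppP.
apply: contra Tt => /eqP marg0; apply/eqP.
exact: (psum_eq0 marg0).
Qed.

Lemma marg_neq0 (dom : V -> D -> Prop) (X Y : {set V}) (T : Krel dom K X) u :
  marg T Y u != 0 -> exists t, T t != 0.
Proof.
move=> marg_u.
have [/hasP [t _ Tt] | /hasPn no_t] := boolP (has (fun t => T t != 0) (ksupp T)).
  by exists t.
move: marg_u; rewrite /marg big1_seq ?eqxx // => t /andP [_].
by rewrite mem_undup => /no_t /negPn /eqP.
Qed.

End Supports.

Lemma modrel_not_globally_consistent (K : comNzSemiRingType) (V : finType)
    (D : eqType) (dom : V -> D -> Prop) (n m : nat) (emb : 'I_n.+2 -> D)
    (X : 'I_m -> {set V}) (delta : 'I_m -> nat) (i0 : 'I_m) :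
  positive_semiring K -> injective emb -> regular_hg n.+2 X -> X i0 != set0 ->
  ~~ (n.+2 %| \sum_(i < m) delta i)%N ->
  ~ globally_consistent dom X (fun i => modrel K emb (X i) (delta i)).
Proof.
move=> K_pos emb_inj reg X_i0 not_dvd [T equivT].
have [t Tt] : exists t, T t != 0.
  have [u R_u] := modrel_witness emb_inj K (delta i0) X_i0.
  by apply: (@marg_neq0 _ _ _ _ _ (X i0) _ u); rewrite -(kequiv_neq0 K_pos u (equivT i0)).
have sum_digits i : \sum_(A in X i) digits emb t A = (delta i)%:R.
  apply: (modrel_restr_sum emb_inj (K := K)).
  by rewrite (kequiv_neq0 K_pos _ (equivT i)) (marg_restr_neq0 K_pos _ Tt).
have d_eq0 (x : 'I_n.+2) : x *+ n.+2 = 0.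
  by rewrite -mulr_natr (eqP (_ : n.+2%:R == 0 :> 'I_n.+2)) ?mulr0 ?natr_Zp_eq0.
move/negP: not_dvd; apply; rewrite -natr_Zp_eq0 natr_sum.
under eq_bigr => i _ do rewrite -sum_digits.
by rewrite (sum_regular_hg _ reg) d_eq0.
Qed.

Local Close Scope ring_scope.

Theorem mainTheorem15
  (K : comNzSemiRingType) (V : finType) (D : eqType) (dom : V -> D -> Prop)
  (k d m : nat) (emb : 'I_d -> D) (X : 'I_m -> {set V}) :
  positive_semiring K ->
  (1 <= k)%N -> (2 <= d)%N -> (0 < m)%N ->
  injective emb -> (forall (A : V) (j : 'I_d), dom A (emb j)) ->
  injective X -> uniform_hg k X -> regular_hg d X ->
  pairwise_consistent dom X (fun i : 'I_m => modrel K emb (X i) (i == m.-1 :> nat)) /\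
  ~ globally_consistent dom X (fun i : 'I_m => modrel K emb (X i) (i == m.-1 :> nat)).
Proof.
move=> K_pos k_gt0 d_gt1 m_gt0 emb_inj dom_emb X_inj unif reg.
case: d emb d_gt1 emb_inj dom_emb reg => [|[|n]] // emb _ emb_inj dom_emb reg.
have X_neq0 i : X i != set0 by rewrite -card_gt0 unif.
split=> [i j | ].
  apply: modrel_consistent => //; first by rewrite !unif.
  by move/X_inj ->.
apply: (modrel_not_globally_consistent (i0 := Ordinal m_gt0)) => //.
have last_lt : m.-1 < m by rewrite ltn_predL.
rewrite (bigD1 (Ordinal last_lt)) //= eqxx big1 ?dvdn1 // => i ne_i.
by case: eqP => // i_last; case/eqP: ne_i; apply: val_inj.
Qed.
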